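(* Let $u,v:\mathbb{C}\to\mathbb{R}$ be harmonic, $f=u+iv$, $\mathcal{R}_f=f(\mathbb{C})$, and suppose $\mathcal{D}(\mathcal{R}_f)\subset\{e^{i\theta}: -\pi\le\theta\le0\}$. For $t\in\mathbb{R}$ let $E_t=\{s\in\mathbb{R}: t+is\in\mathcal{R}_f\}$ and $\Phi(t)=\max\{\sup E_t,\,0\}$ (with $\sup\varnothing=-\infty$). Then each $E_t$ is bounded above, so $\Phi:\mathbb{R}\to[0,+\infty)$ is well defined; moreover $\Phi$ is locally bounded and $\lim_{|t|\to\infty}\Phi(t)/|t|=0$.
   Context: $\partial\mathbb{D}$ is the unit circle. For $\mathcal{R}\subset\mathbb{C}$, $e^{i\theta}\in\partial\mathbb{D}$ is an asymptotic direction of $\mathcal{R}$ if there exist $w_n\in\mathcal{R}$ and $\varepsilon_n>0$, $\varepsilon_n\to0$, with $\varepsilon_n w_n\to e^{i\theta}$; $\mathcal{D}(\mathcal{R})$ is the set of asymptotic directions. *)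

From Stdlib Require Import Reals.
From Coquelicot Require Import Coquelicot.
Open Scope R_scope.

(* The complex plane is identified with R * R (z = x + i y  <->  (x, y)). *)

Definition dx (u : R -> R -> R) : R -> R -> R := fun x y => Derive (fun t => u t y) x.
Definition dy (u : R -> R -> R) : R -> R -> R := fun x y => Derive (fun t => u x t) y.

Definition jcont (w : R -> R -> R) : Prop :=
  forall x y, continuous (fun p : R * R => w (fst p) (snd p)) (x, y).

Definition has_partials (w : R -> R -> R) : Prop :=
  forall x y, ex_derive (fun t => w t y) x /\ ex_derive (fun t => w x t) y.

Definition harmonic (u : R -> R -> R) : Prop :=
  jcont u /\
  has_partials u /\ jcont (dx u) /\ jcont (dy u) /\
  has_partials (dx u) /\ has_partials (dy u) /\
  jcont (dx (dx u)) /\ jcont (dy (dx u)) /\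
  jcont (dx (dy u)) /\ jcont (dy (dy u)) /\
  (forall x y, dx (dx u) x y + dy (dy u) x y = 0).

Definition asymptotic_direction (S : R * R -> Prop) (z : R * R) : Prop :=
  fst z ^ 2 + snd z ^ 2 = 1 /\
  exists (w : nat -> R * R) (eps : nat -> R),
    (forall n, S (w n)) /\ (forall n, 0 < eps n) /\
    is_lim_seq eps 0 /\
    is_lim_seq (fun n => eps n * fst (w n)) (fst z) /\
    is_lim_seq (fun n => eps n * snd (w n)) (snd z).

Definition range_f (u v : R -> R -> R) (p : R * R) : Prop :=
  exists x y, p = (u x y, v x y).

Definition E (u v : R -> R -> R) (t : R) (s : R) : Prop := range_f u v (t, s).

(* Phi(t) = max (sup E_t, 0), sup taken in the extended reals (sup of the
   empty set = -oo).  Once E_t is bounded above this is a real number;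
   the -oo case (E_t empty) gives max(-oo,0) = 0. *)
Definition Phi (u v : R -> R -> R) (t : R) : R :=
  Rmax (match Lub_Rbar (E u v t) with Finite r => r | _ => 0 end) 0.

From Stdlib Require Import Reals Lra Lia Rtopology IndefiniteDescription Classical.
From Coquelicot Require Import Coquelicot.
Open Scope R_scope.

(* Only the hypothesis on asymptotic directions matters.  If points of the
   range went to infinity inside some upper cone |x| <= K y, their slopes x/y
   would stay in [-K, K]; a cluster value c of the slopes yields the
   asymptotic direction (c, 1)/sqrt(1 + c^2), which lies in the open upper
   half plane.  Hence the range is bounded above in every upper cone, and so
   in every vertical strip, which gives the finiteness and local boundedness
   of Phi; the cone |x| <= y/eps gives Phi(t) <= eps |t| for large |t|. *)

Lemma is_lim_seq_inv_INR_S : is_lim_seq (fun k => / INR (S k)) 0.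
Proof.
  apply (is_lim_seq_inv (fun k => INR (S k)) p_infty); [|easy].
  exact (proj1 (is_lim_seq_incr_1 INR p_infty) is_lim_seq_INR).
Qed.

Lemma inv_INR_S_gt0 (k : nat) : 0 < / INR (S k).
Proof. apply Rinv_0_lt_compat, lt_0_INR; lia. Qed.

Lemma bounded_seq_cluster_subseq (q : nat -> R) (K : R) :
  (forall n, Rabs (q n) <= K) ->
  exists (c : R) (f : nat -> nat),
    (forall k, (k <= f k)%nat) /\ is_lim_seq (fun k => q (f k)) c.
Proof.
  intros Hq.
  destruct (Bolzano_Weierstrass q (fun x => - K <= x <= K) (compact_P3 (- K) K))
    as [c Hc].
  { intro n; apply Rabs_le_between, Hq. }
  assert (near : forall k, exists n, (k <= n)%nat /\ Rabs (q n - c) < / INR (S k)).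
  { intro k; apply (Hc (disc c (mkposreal _ (inv_INR_S_gt0 k))) k).
    exists (mkposreal _ (inv_INR_S_gt0 k)); intros y Hy; exact Hy. }
  destruct (functional_choice _ near) as [f Hf].
  exists c, f; split; [intro k; apply Hf|].
  apply (is_lim_seq_le_le (fun k => c - / INR (S k)) _ (fun k => c + / INR (S k))).
  - intro k; destruct (Hf k) as [_ Hk]; apply Rabs_def2 in Hk; lra.
  - replace (Finite c) with (Finite (c - 0)) by (f_equal; ring).
    exact (is_lim_seq_minus' _ _ _ _ (is_lim_seq_const c) is_lim_seq_inv_INR_S).
  - replace (Finite c) with (Finite (c + 0)) by (f_equal; ring).
    exact (is_lim_seq_plus' _ _ _ _ (is_lim_seq_const c) is_lim_seq_inv_INR_S).
Qed.

Lemma asymptotic_direction_of_slope (S : R * R -> Prop) (w : nat -> R * R) (c : R) :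
  (forall n, S (w n)) -> (forall n, 0 < snd (w n)) ->
  is_lim_seq (fun n => snd (w n)) p_infty ->
  is_lim_seq (fun n => fst (w n) / snd (w n)) c ->
  asymptotic_direction S (/ sqrt (1 + c ^ 2) * c, / sqrt (1 + c ^ 2)).
Proof.
  intros Sw Hpos Hinf Hslope.
  set (r := sqrt (1 + c ^ 2)).
  assert (Hr2 : r ^ 2 = 1 + c ^ 2) by (apply pow2_sqrt; nra).
  assert (Hr : 0 < r) by (apply sqrt_lt_R0; nra).
  split.
  { simpl; field_simplify; [|lra]. rewrite Hr2; field. nra. }
  exists w, (fun n => / r * / snd (w n)).
  split; [exact Sw|]; split.
  { intro n; apply Rmult_lt_0_compat; apply Rinv_0_lt_compat; auto. }
  split; [|split].
  - replace (Finite 0) with (Rbar_mult (/ r) 0) by (simpl; f_equal; ring).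
    apply is_lim_seq_scal_l.
    exact (is_lim_seq_inv _ _ Hinf ltac:(easy)).
  - apply (is_lim_seq_ext (fun n => / r * (fst (w n) / snd (w n)))).
    { intro n; unfold Rdiv; ring. }
    exact (is_lim_seq_scal_l _ (/ r) c Hslope).
  - apply (is_lim_seq_ext (fun _ => / r)).
    { intro n; simpl; field; split; [apply Rgt_not_eq, Hpos | lra]. }
    apply is_lim_seq_const.
Qed.

Section LowerDirections.

Variable S : R * R -> Prop.

Hypothesis lower_directions : forall z, asymptotic_direction S z ->
  exists theta, - PI <= theta <= 0 /\ z = (cos theta, sin theta).

Lemma asymptotic_direction_snd_nonpos (z : R * R) :
  asymptotic_direction S z -> snd z <= 0.
Proof.
  intros Hz; destruct (lower_directions z Hz) as [theta [Htheta ->]]; simpl.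
  pose proof (sin_ge_0 (- theta) ltac:(lra) ltac:(lra)) as Hsin.
  rewrite sin_neg in Hsin; lra.
Qed.

Lemma upper_cone_bounded (K : R) :
  exists M, forall p, S p -> Rabs (fst p) <= K * snd p -> snd p <= M.
Proof.
  apply NNPP; intro Hunbounded.
  assert (far : forall n : nat, exists p,
             S p /\ Rabs (fst p) <= K * snd p /\ INR n < snd p).
  { intro n; apply NNPP; intro Hn; apply Hunbounded; exists (INR n).
    intros p Sp Hp; apply Rnot_lt_le; intro; apply Hn; eauto. }
  destruct (functional_choice _ far) as [w Hw].
  assert (Hpos : forall n, 0 < snd (w n)).
  { intro n; pose proof (pos_INR n); pose proof (Hw n); lra. }
  destruct (bounded_seq_cluster_subseq (fun n => fst (w n) / snd (w n)) K)
    as [c [f [Hf Hslope]]].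
  { intro n; unfold Rdiv; rewrite Rabs_mult, Rabs_inv, (Rabs_pos_eq (snd (w n)))
      by (left; apply Hpos).
    apply (Rmult_le_reg_r (snd (w n))); [apply Hpos|].
    rewrite Rmult_assoc, Rinv_l, Rmult_1_r by apply Rgt_not_eq, Hpos; apply Hw. }
  assert (Hinf : is_lim_seq (fun k => snd (w (f k))) p_infty).
  { apply (is_lim_seq_le_p_loc INR); [|exact is_lim_seq_INR].
    exists 0%nat; intros k _; pose proof (le_INR _ _ (Hf k)); pose proof (Hw (f k)); lra. }
  pose proof (asymptotic_direction_snd_nonpos _
    (asymptotic_direction_of_slope S (fun k => w (f k)) c
       (fun k => proj1 (Hw (f k))) (fun k => Hpos (f k)) Hinf Hslope)) as Hsnd.
  cbn [snd] in Hsnd.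
  assert (0 < / sqrt (1 + c ^ 2)) by (apply Rinv_0_lt_compat, sqrt_lt_R0; nra).
  lra.
Qed.

Lemma vertical_strip_bounded (a : R) :
  exists M, 0 <= M /\ forall p, S p -> Rabs (fst p) <= a -> snd p <= M.
Proof.
  destruct (upper_cone_bounded a) as [M HM].
  exists (Rmax M 1); split; [pose proof (Rmax_r M 1); lra|].
  intros p Sp Hp; destruct (Rle_lt_dec 1 (snd p)) as [Hge | Hlt].
  - apply (Rle_trans _ M); [|apply Rmax_l].
    apply HM; [exact Sp|]; pose proof (Rabs_pos (fst p)); nra.
  - pose proof (Rmax_r M 1); lra.
Qed.

End LowerDirections.

Lemma Phi_le (u v : R -> R -> R) (t M : R) :
  0 <= M -> (forall s, E u v t s -> s <= M) -> Phi u v t <= M.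
Proof.
  intros HM Hub.
  pose proof (proj2 (Lub_Rbar_correct (E u v t)) M Hub) as Hlub.
  unfold Phi; destruct (Lub_Rbar (E u v t)) as [r| |]; simpl in Hlub;
    apply Rmax_lub; lra.
Qed.

Lemma Phi_eventually_le (u v : R -> R -> R) :
  (forall z, asymptotic_direction (range_f u v) z ->
     exists theta, - PI <= theta <= 0 /\ z = (cos theta, sin theta)) ->
  forall eps, 0 < eps -> exists T, forall t, T < Rabs t -> Phi u v t <= eps * Rabs t.
Proof.
  intros Hdir eps Heps.
  destruct (upper_cone_bounded _ Hdir (/ eps)) as [M HM].
  exists (Rmax M 0 / eps); intros t Ht.
  assert (HepsT : Rmax M 0 < eps * Rabs t).
  { apply (Rmult_lt_compat_l eps) in Ht; [|exact Heps].
    replace (eps * (Rmax M 0 / eps)) with (Rmax M 0) in Ht by (field; lra); exact Ht. }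
  apply Phi_le; [pose proof (Rmax_r M 0); lra|].
  intros s Hs; apply Rnot_lt_le; intro Hbig.
  assert (Hcone : Rabs (fst (t, s)) <= / eps * snd (t, s)).
  { simpl; apply (Rmult_le_reg_l eps); [exact Heps|].
    rewrite <- Rmult_assoc, Rinv_r, Rmult_1_l by lra; lra. }
  pose proof (HM (t, s) Hs Hcone); pose proof (Rmax_l M 0); simpl in *; lra.
Qed.

Theorem lemma6 (u v : R -> R -> R) :
  harmonic u -> harmonic v ->
  (forall z, asymptotic_direction (range_f u v) z ->
     exists theta, - PI <= theta <= 0 /\ z = (cos theta, sin theta)) ->
  (forall t, exists M, forall s, E u v t s -> s <= M) /\
  (forall t, 0 <= Phi u v t) /\
  (forall t0, exists delta M, 0 < delta /\
     forall t, Rabs (t - t0) < delta -> Phi u v t <= M) /\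
  (forall eps, 0 < eps -> exists T, forall t, T < Rabs t ->
     Rabs (Phi u v t / Rabs t) < eps).
Proof.
  intros _ _ Hdir.
  pose proof (vertical_strip_bounded _ Hdir) as strip.
  split; [|split; [|split]].
  - intro t; destruct (strip (Rabs t)) as [M [_ HM]].
    exists M; intros s Hs; exact (HM (t, s) Hs (Rle_refl _)).
  - intro t; apply Rmax_r.
  - intro t0; destruct (strip (Rabs t0 + 1)) as [M [HM0 HM]].
    exists 1, M; split; [lra|]; intros t Ht.
    apply Phi_le; [exact HM0|]; intros s Hs; apply (HM (t, s) Hs); simpl.
    pose proof (Rabs_triang_inv t t0); lra.
  - intros eps Heps.
    destruct (Phi_eventually_le u v Hdir (eps / 2)) as [T HT]; [lra|].
    exists (Rmax T 0); intros t Ht.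
    assert (Ht0 : 0 < Rabs t) by (pose proof (Rmax_r T 0); lra).
    specialize (HT t ltac:(pose proof (Rmax_l T 0); lra)).
    rewrite Rabs_pos_eq by (apply Rdiv_le_0_compat; [apply Rmax_r | exact Ht0]).
    apply (Rmult_lt_reg_r (Rabs t)); [exact Ht0|].
    unfold Rdiv; rewrite Rmult_assoc, Rinv_l, Rmult_1_r by lra; nra.
Qed.
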